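(* Let $A\in\mathbb{R}^{m\times n}$, $X\in\mathbb{R}^{n\times r}$ and $Y\in\mathbb{R}^{m\times r}$ satisfy $AX=Y$, where $\|X\|_0=k$ and the columns of $Y$ are linearly independent. Let $Q$ be a matrix whose columns form a basis of the orthogonal complement $R(Y)^\perp\subset\mathbb{R}^m$ of the column space of $Y$. Suppose $A$ satisfies the restricted isometry condition $0\leq \delta^L_{2k-r+1}(A)<1$. Then $$k-r=\min_{I\subset\{1,\dots,n\},\ |I|\geq k}\operatorname{rank}\left(Q^*A_I\right),$$ and $$\operatorname{supp}X=\arg\min_{I\subset\{1,\dots,n\},\ |I|\geq k}\operatorname{rank}\left(Q^*A_I\right),$$ i.e. $\operatorname{supp}X$ is the index set attaining this minimum.
   Context: For a matrix $X\in\mathbb{R}^{n\times r}$ with rows $\mathbf{x}^1,\dots,\mathbf{x}^n$, $\operatorname{supp}X=\{1\le i\le n:\mathbf{x}^i\neq 0\}$ is the set of indices of nonzero rows and $\|X\|_0=|\operatorname{supp}X|$. For an index set $I\subset\{1,\dots,n\}$, $A_I$ denotes the submatrix of $A$ consisting of the columns indexed by $I$. $R(Y)$ denotes the column space (range) of $Y$, and $Q^*$ denotes the (conjugate) transpose of $Q$. The condition $0\leq\delta^L_{s}(A)<1$ means that there is a left RIP constant $\delta^L_s\in[0,1)$ with $(1-\delta^L_s)\|\mathbf{x}\|^2\leq\|A\mathbf{x}\|^2$ for all $\mathbf{x}\in\mathbb{R}^n$ with at most $s$ nonzero entries; here $s=2k-r+1$. *)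

From HB Require Import structures.
From mathcomp Require Import all_boot all_order all_algebra.
Set Implicit Arguments. Unset Strict Implicit. Unset Printing Implicit Defensive.
Import Order.TTheory GRing.Theory Num.Theory.
Local Open Scope ring_scope.

Definition supp (R : ringType) (n r : nat) (X : 'M[R]_(n, r)) : {set 'I_n} :=
  [set i | row i X != 0].

Definition norm0 (R : ringType) (n r : nat) (X : 'M[R]_(n, r)) : nat :=
  #|supp X|.

Definition colsubset (R : ringType) (m n : nat) (A : 'M[R]_(m, n)) (I : {set 'I_n})
  : 'M[R]_(m, #|I|) :=
  colsub (fun j : 'I_#|I| => enum_val j) A.

Definition sqnorm (R : ringType) (n : nat) (x : 'cV[R]_n) : R :=
  \sum_(i < n) x i 0 ^+ 2.

Definition left_RIP (R : realFieldType) (m n : nat) (A : 'M[R]_(m, n)) (s : nat) : Prop :=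
  exists delta : R, 0 <= delta /\ delta < 1 /\
    forall x : 'cV[R]_n, (norm0 x <= s)%N ->
      (1 - delta) * sqnorm x <= sqnorm (A *m x).

From HB Require Import structures.
From mathcomp Require Import all_boot all_order all_algebra.
From mathcomp Require Import zify.
Import Order.TTheory GRing.Theory Num.Theory.
Local Open Scope ring_scope.
Set Implicit Arguments. Unset Strict Implicit.

(* With M = A^T Q, let K_I be the space of vectors supported on I that A maps
   into R(Y) = ker Q^T; then rank (Q^T A_I) = |I| - dim K_I. The RIP makes A
   injective on s-sparse vectors, s = 2k - r + 1, so intersecting a subspace of
   K_T with the vectors supported on s indices of T shows that its dimension is
   at most r + (|T| - s). Hence rank (Q^T A_I) >= min(|I|, s) - r, with equality
   for I = supp X, where K_I contains the r independent rows of X^T. If |I| = k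
   attains the minimum then dim K_I = r, and with j = dim (K_I n R(X^T)) the
   space K_I + R(X^T) has dimension 2r - j and is supported on I u supp X, a
   set of size at most 2k - j; the bound forces j = r, so R(X^T) <= K_I and
   supp X <= I. *)

Lemma exists_subset_card (T : finType) (A : {set T}) c :
  (c <= #|A|)%N -> exists2 B : {set T}, B \subset A & #|B| = c.
Proof.
move=> cA; exists [set x | x \in take c (enum A)].
  by apply/subsetP => x; rewrite inE => /mem_take; rewrite mem_enum.
rewrite cardsE (card_uniqP _) ?take_uniq ?enum_uniq // size_take -cardE.
by rewrite ltn_neqAle cA andbT; case: eqP.
Qed.

Section SelectionMatrix.
Variables (R : fieldType) (n : nat).

(* The rows of [sel_mx I] are the unit vectors e_j, j \in I, in increasing
   order, so its row space consists of the row vectors supported in I. *)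
Definition sel_mx (I : {set 'I_n}) : 'M[R]_(#|I|, n) :=
  \matrix_(t, j) (enum_val t == j)%:R.

Lemma colsubsetE m (A : 'M[R]_(m, n)) (I : {set 'I_n}) :
  colsubset A I = A *m (sel_mx I)^T.
Proof.
apply/matrixP => i t; rewrite !mxE (bigD1 (enum_val t)) //= big1 ?addr0.
  by rewrite !mxE eqxx mulr1.
by move=> j jt; rewrite !mxE eq_sym (negPf jt) mulr0.
Qed.

Lemma sub_sel_mxP (I : {set 'I_n}) (x : 'rV[R]_n) :
  (x <= sel_mx I)%MS <-> (forall j, j \notin I -> x 0 j = 0).
Proof.
split=> [/submxP [w ->] j jI | x_supp].
  rewrite !mxE big1 // => t _; rewrite !mxE.
  case: eqP => [tj | _]; last by rewrite mulr0.
  by move: (enum_valP t); rewrite tj (negPf jI).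
rewrite [x]row_sum_delta; apply: summx_sub => j _.
have [jI | jI] := boolP (j \in I); last by rewrite x_supp // scale0r sub0mx.
apply: scalemx_sub.
have -> : delta_mx 0 j = row (enum_rank_in jI j) (sel_mx I).
  by apply/rowP => b; rewrite !mxE (enum_rankK_in jI jI) eq_sym.
exact: row_sub.
Qed.

Lemma mxrank_sel_mx (I : {set 'I_n}) : \rank (sel_mx I) = #|I|.
Proof.
apply/eqP; rewrite eqn_leq rank_leq_row /= -{1}(mxrank1 R #|I|).
have -> : 1%:M = sel_mx I *m (sel_mx I)^T.
  apply/matrixP => a b; rewrite !mxE (bigD1 (enum_val a)) //= big1 ?addr0.
    by rewrite !mxE eqxx mul1r (inj_eq enum_val_inj) eq_sym.
  by move=> j ja; rewrite !mxE eq_sym (negPf ja) mul0r.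
exact: mxrankM_maxl.
Qed.

Lemma sel_mxS (I J : {set 'I_n}) : I \subset J -> (sel_mx I <= sel_mx J)%MS.
Proof.
move=> IJ; apply/row_subP => t; have /sub_sel_mxP tI := row_sub t (sel_mx I).
by apply/sub_sel_mxP => j jJ; apply: tI; apply: contra jJ; apply: subsetP.
Qed.

Lemma capmx_sel_mx (I J : {set 'I_n}) :
  (sel_mx I :&: sel_mx J <= sel_mx (I :&: J))%MS.
Proof.
apply/row_subP => t; set x := row t _.
have /sub_sel_mxP xI : (x <= sel_mx I)%MS.
  by rewrite (submx_trans (row_sub _ _)) ?capmxSl.
have /sub_sel_mxP xJ : (x <= sel_mx J)%MS.
  by rewrite (submx_trans (row_sub _ _)) ?capmxSr.
by apply/sub_sel_mxP => j; rewrite inE negb_and => /orP [/xI | /xJ].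
Qed.

Lemma trmx_sub_sel_mx r (X : 'M[R]_(n, r)) (I : {set 'I_n}) :
  (X^T <= sel_mx I)%MS <-> supp X \subset I.
Proof.
split=> [XI | SI].
  apply/subsetP => j; rewrite inE; apply: contraR => jI; apply/eqP/rowP => c.
  have /sub_sel_mxP cI := submx_trans (row_sub c _) XI.
  by have := cI j jI; rewrite !mxE.
apply/row_subP => c; apply/sub_sel_mxP => j jI; rewrite !mxE.
have : j \notin supp X by apply: contra jI; apply: subsetP.
by rewrite inE negbK => /eqP/rowP/(_ c); rewrite !mxE.
Qed.

Lemma sub_kermx_mulmx m p w
    (N : 'M[R]_(n, m)) (Q : 'M[R]_(m, p)) (B : 'M[R]_(w, n)) :
  (B <= kermx (N *m Q))%MS = (B *m N <= kermx Q)%MS.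
Proof. by apply/sub_kermxP/sub_kermxP; rewrite mulmxA. Qed.

Lemma mxrank_colsubset m p
    (A : 'M[R]_(m, n)) (Q : 'M[R]_(m, p)) (I : {set 'I_n}) :
  \rank (Q^T *m colsubset A I) =
    (#|I| - \rank (sel_mx I :&: kermx (A^T *m Q)))%N.
Proof.
rewrite colsubsetE -mxrank_tr !trmx_mul !trmxK.
have := mxrank_mul_ker (sel_mx I) (A^T *m Q).
rewrite mxrank_sel_mx mulmxA => rkE.
by rewrite -[X in (X - _)%N]rkE addnK.
Qed.

End SelectionMatrix.

Section OrthogonalComplement.
Variables (R : fieldType) (m p r : nat) (Q : 'M[R]_(m, p)) (Y : 'M[R]_(m, r)).

Lemma trmx_eq_kermx :
  (forall v : 'cV[R]_m, (exists c : 'cV[R]_p, v = Q *m c) <-> Y^T *m v = 0) ->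
  (Q^T == kermx Y)%MS.
Proof.
move=> QY; apply/andP; split.
  apply/row_subP => i; apply/sub_kermxP; apply: trmx_inj.
  rewrite trmx_mul trmx0 -tr_col trmxK (proj1 (QY _)) //.
  by exists (delta_mx i 0); rewrite colE.
apply/row_subP => i; have /sub_kermxP xY := row_sub i (kermx Y).
have [c xQ] : exists c, (row i (kermx Y))^T = Q *m c.
  by apply/QY; rewrite -trmx_mul xY trmx0.
by apply/submxP; exists c^T; rewrite -trmx_mul -xQ trmxK.
Qed.

Lemma kermx_trmx_ker : (Q^T == kermx Y)%MS -> (kermx Q :=: Y^T)%MS.
Proof.
move=> QY; have YQ : (Y^T <= kermx Q)%MS.
  apply/sub_kermxP; apply: trmx_inj; rewrite trmx_mul trmxK trmx0.
  by apply/sub_kermxP; rewrite (eqmxP QY).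
apply/eqmxP; rewrite YQ -(mxrank_leqif_sup YQ).2 mxrank_ker -(mxrank_tr Q).
by rewrite (eqmx_rank QY) mxrank_ker mxrank_tr subKn ?rank_leq_row ?eqxx.
Qed.

End OrthogonalComplement.

Definition sparse_injective (R : nzRingType) m n (A : 'M[R]_(m, n)) s :=
  forall x : 'cV[R]_n, (norm0 x <= s)%N -> A *m x = 0 -> x = 0.

Lemma sqnorm_eq0 (R : realDomainType) n (x : 'cV[R]_n) : sqnorm x = 0 -> x = 0.
Proof.
move=> /psumr_eq0P x0; apply/colP => i.
by have /eqP := x0 (fun i _ => sqr_ge0 _) i isT; rewrite sqrf_eq0 mxE => /eqP.
Qed.

Lemma left_RIP_sparse_injective (R : realFieldType) m n (A : 'M[R]_(m, n)) s :
  left_RIP A s -> sparse_injective A s.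
Proof.
move=> [d [_ [d1 RIP]]] x xs Ax0; apply: sqnorm_eq0; apply/eqP.
have sq0 : sqnorm (0 : 'cV[R]_m) = 0 by apply: big1 => i _; rewrite mxE expr0n.
have := RIP x xs; rewrite Ax0 sq0 pmulr_rle0 ?subr_gt0 // => le0.
by rewrite eq_le le0 sumr_ge0 // => i _; apply: sqr_ge0.
Qed.

Section SparsePreimage.
Variables (R : fieldType) (m n s : nat) (A : 'M[R]_(m, n)).
Hypothesis injA : sparse_injective A s.

Lemma mxrank_mulmx_sparse w (W : 'M[R]_(w, n)) (I : {set 'I_n}) :
  (W <= sel_mx R I)%MS -> (#|I| <= s)%N -> \rank (W *m A^T) = \rank W.
Proof.
move=> WI Is; have /eqP cap0 : (W :&: kermx A^T)%MS == 0.
  rewrite -submx0; apply/row_subP => i; rewrite submx0; set x := row i _.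
  have /sub_kermxP xA : (x <= kermx A^T)%MS.
    by rewrite (submx_trans (row_sub _ _)) ?capmxSr.
  have xI : (x^T^T <= sel_mx R I)%MS.
    by rewrite trmxK (submx_trans (row_sub _ _)) // (submx_trans (capmxSl _ _)).
  have x0 : x^T = 0.
    apply: injA; last by rewrite -[A]trmxK -trmx_mul xA trmx0.
    exact: leq_trans (subset_leq_card (proj1 (trmx_sub_sel_mx _ _) xI)) Is.
  by rewrite -[x]trmxK x0 trmx0.
by rewrite -(mxrank_mul_ker W A^T) cap0 mxrank0 addn0.
Qed.

Lemma mxrank_sparse_preimage_le w v
    (W : 'M[R]_(w, n)) (V : 'M[R]_(v, m)) (T : {set 'I_n}) :
  (W <= sel_mx R T)%MS -> (W *m A^T <= V)%MS ->
  (\rank W <= \rank V + (#|T| - s))%N.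
Proof.
move=> WT WV; have [T' T'T cardT'] := exists_subset_card (geq_minl #|T| s).
set Z := (W :&: sel_mx R T')%MS.
have rkZ : (\rank Z <= \rank V)%N.
  rewrite -(mxrank_mulmx_sparse (capmxSr W _)); last by rewrite cardT' geq_minr.
  by apply/mxrankS/(submx_trans _ WV)/submxMr/capmxSl.
have rk_sum : (\rank (W + sel_mx R T') <= #|T|)%N.
  by rewrite -(mxrank_sel_mx R T) mxrankS // addsmx_sub WT sel_mxS.
by have := mxrank_sum_cap W (sel_mx R T'); rewrite mxrank_sel_mx -/Z; lia.
Qed.

End SparsePreimage.

Section SupportRecovery.
Variables (R : fieldType) (m n r p s : nat).
Variables (A : 'M[R]_(m, n)) (X : 'M[R]_(n, r)) (Q : 'M[R]_(m, p)).
Hypothesis injA : sparse_injective A s.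
Hypothesis kerQ : (kermx Q :=: (A *m X)^T)%MS.
Hypothesis rankAX : \rank (A *m X) = r.
Hypothesis sparsity : (2 * #|supp X| + 1 - r <= s)%N.

Local Notation k := #|supp X|.
Local Notation K I := (sel_mx R I :&: kermx (A^T *m Q))%MS.

Lemma mxrank_ker_sel_le w (W : 'M[R]_(w, n)) (T : {set 'I_n}) :
  (W <= sel_mx R T)%MS -> (W <= kermx (A^T *m Q))%MS ->
  (\rank W <= r + (#|T| - s))%N.
Proof.
move=> WT; rewrite sub_kermx_mulmx kerQ => WAX.
rewrite -rankAX -(mxrank_tr (A *m X)).
exact: mxrank_sparse_preimage_le WT WAX.
Qed.

Lemma mxrank_trX : \rank X^T = r.
Proof.
apply/eqP; rewrite eqn_leq rank_leq_row mxrank_tr -{1}rankAX.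
exact: mxrankM_maxr.
Qed.

Lemma trX_sub_sel : (X^T <= sel_mx R (supp X))%MS.
Proof. exact/trmx_sub_sel_mx. Qed.

Lemma rank_le_card_supp : (r <= k)%N.
Proof. by have := mxrankS trX_sub_sel; rewrite mxrank_trX mxrank_sel_mx. Qed.

Lemma trX_sub_ker : (X^T <= kermx (A^T *m Q))%MS.
Proof. by rewrite sub_kermx_mulmx kerQ -trmx_mul. Qed.

Lemma rank_colsubset_ge (I : {set 'I_n}) :
  (minn #|I| s - r <= \rank (Q^T *m colsubset A I))%N.
Proof.
rewrite mxrank_colsubset.
by have := mxrank_ker_sel_le (capmxSl _ _) (capmxSr (sel_mx R I) _); lia.
Qed.

Lemma rank_colsubset_supp : \rank (Q^T *m colsubset A (supp X)) = (k - r)%N.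
Proof.
have XK : (X^T <= K (supp X))%MS by rewrite sub_capmx trX_sub_sel trX_sub_ker.
have := mxrankS XK; rewrite mxrank_trX => rkK_ge.
have := mxrank_ker_sel_le (capmxSl _ _) (capmxSr (sel_mx R (supp X)) _).
by have := rank_le_card_supp; rewrite mxrank_colsubset; lia.
Qed.

Lemma supp_eq_of_rank (I : {set 'I_n}) :
  #|I| = k -> \rank (Q^T *m colsubset A I) = (k - r)%N -> I = supp X.
Proof.
move=> cardI; rewrite mxrank_colsubset => rkI.
have rkKI : \rank (K I) = r.
  have := mxrank_ker_sel_le (capmxSl _ _) (capmxSr (sel_mx R I) _).
  by have := rank_le_card_supp; lia.
set U := (K I + X^T)%MS.
have rkU : (\rank U <= r + (#|I :|: supp X| - s))%N.
  apply: mxrank_ker_sel_le; rewrite addsmx_sub ?capmxSr ?trX_sub_ker //=.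
  rewrite (submx_trans (capmxSl _ _)) ?sel_mxS ?subsetUl //=.
  by rewrite (submx_trans trX_sub_sel) ?sel_mxS ?subsetUr.
have rk_cap : (\rank (K I :&: X^T) <= #|I :&: supp X|)%N.
  rewrite -(mxrank_sel_mx R (I :&: supp X)) mxrankS //.
  by rewrite (submx_trans _ (capmx_sel_mx _ _ _)) ?capmxS ?capmxSl ?trX_sub_sel.
have := mxrank_sum_cap (K I) X^T; rewrite -/U rkKI mxrank_trX => sumE.
have := mxrankS (capmxSr (K I) X^T); rewrite mxrank_trX => rk_cap_le.
have cardUI := cardsUI I (supp X); have rk := rank_le_card_supp.
have XKI : (X^T <= K I :&: X^T)%MS.
  by rewrite -(mxrank_leqif_sup (capmxSr _ _)).2 mxrank_trX; apply/eqP; lia.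
have /trmx_sub_sel_mx SI : (X^T <= sel_mx R I)%MS.
  by rewrite (submx_trans XKI) // (submx_trans (capmxSl _ _)) ?capmxSl.
by apply/esym/eqP; rewrite eqEcard SI cardI leqnn.
Qed.

End SupportRecovery.

Theorem theorem1 (R : realFieldType) (m n r k p : nat)
    (A : 'M[R]_(m, n)) (X : 'M[R]_(n, r)) (Y : 'M[R]_(m, r)) (Q : 'M[R]_(m, p)) :
  A *m X = Y ->
  norm0 X = k ->
  \rank Y = r ->
  (* the columns of Q form a basis of R(Y)^perp *)
  \rank Q = p ->
  (forall v : 'cV[R]_m, (exists c : 'cV[R]_p, v = Q *m c) <-> Y^T *m v = 0) ->
  left_RIP A (2 * k + 1 - r) ->
  (* k - r is the minimum of rank (Q^* A_I) over |I| >= k ... *)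
  ((forall I : {set 'I_n}, (k <= #|I|)%N -> (k - r <= \rank (Q^T *m colsubset A I))%N) /\
   (exists I : {set 'I_n}, (k <= #|I|)%N /\ \rank (Q^T *m colsubset A I) = (k - r)%N)) /\
  (* ... and supp X is exactly the set of minimizers *)
  (forall I : {set 'I_n}, (k <= #|I|)%N ->
     (\rank (Q^T *m colsubset A I) = (k - r)%N <-> I = supp X)).
Proof.
move=> AX cardS rankY _ QY /left_RIP_sparse_injective injA; subst Y.
have {}cardS : #|supp X| = k := cardS.
have sparsity : (2 * #|supp X| + 1 - r <= 2 * k + 1 - r)%N by rewrite cardS.
have kerQ := kermx_trmx_ker (trmx_eq_kermx QY).
have rk := rank_le_card_supp rankY.
have lower (I : {set 'I_n}) :
    (minn #|I| (2 * k + 1 - r) - r <= \rank (Q^T *m colsubset A I))%N.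
  exact: rank_colsubset_ge injA kerQ rankY sparsity I.
have rk_supp : \rank (Q^T *m colsubset A (supp X)) = (#|supp X| - r)%N.
  exact: rank_colsubset_supp injA kerQ rankY sparsity.
rewrite cardS in rk; split; [split|].
- by move=> I kI; have := lower I; lia.
- by exists (supp X); rewrite rk_supp cardS.
move=> I kI; split=> [rkI | ->]; last by rewrite rk_supp cardS.
have [kI' | cardI] := ltnP k #|I|.
  by have := lower I; rewrite rkI; lia.
by apply: (supp_eq_of_rank injA kerQ rankY sparsity); rewrite cardS //; lia.
Qed.
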